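(* Let $X,Y$ be exponential vector spaces over a field $K$ and $\phi:X\to Y$ an order-isomorphism. Then (1) for any generator $B$ of $X\smallsetminus X_0$, $\phi(B)$ is a generator of $Y\smallsetminus Y_0$; (2) for any orderly independent subset $B$ of $X\smallsetminus X_0$, $\phi(B)$ is an orderly independent subset of $Y\smallsetminus Y_0$. Consequently, for any basis $B$ of $X\smallsetminus X_0$, $\phi(B)$ is a basis of $Y\smallsetminus Y_0$.
   Context: An exponential vector space (evs) over a field $K$ is a partially ordered set $(X,\leq)$ with a binary operation $+$ on $X$ and a map $K\times X\to X$, $(\alpha,x)\mapsto \alpha x$, such that: (A1) $(X,+)$ is a commutative semigroup with identity $\theta$; (A2) $x\leq y$ implies $x+z\leq y+z$ and $\alpha x\leq \alpha y$ for all $z\in X$, $\alpha\in K$; (A3) $\alpha(x+y)=\alpha x+\alpha y$, $\alpha(\beta x)=(\alpha\beta)x$, $(\alpha+\beta)x\leq \alpha x+\beta x$, $1x=x$; (A4) $\alpha x=\theta$ iff $\alpha=0$ or $x=\theta$; (A5) $x+(-1)x=\theta$ iff $x\in X_0$, where $X_0:=\{z\in X: y\not\leq z \text{ for all } y\in X\smallsetminus\{z\}\}$ (the set of minimal elements, called the primitive space); (A6) for each $x\in X$ there is $p\in X_0$ with $p\leq x$. An order-morphism $f:X\to Y$ is a map with $f(x+y)=f(x)+f(y)$, $f(\alpha x)=\alpha f(x)$, $x\leq y\Rightarrow f(x)\leq f(y)$, and such that for $p,q\in f(X)$ with $p\leq q$ one has $f^{-1}(p)\subseteq\{z: z\leq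 w \text{ for some } w\in f^{-1}(q)\}$ and $f^{-1}(q)\subseteq\{z: z\geq w \text{ for some } w\in f^{-1}(p)\}$; an order-isomorphism is a bijective order-morphism. For $x\in X\smallsetminus X_0$ let $L(x):=\{z\in X: z\geq \alpha x+p \text{ for some } \alpha\in K\smallsetminus\{0\},\ p\in X_0\}$ (similarly in $Y$ with $Y_0$). A subset $B\subseteq X\smallsetminus X_0$ generates $X\smallsetminus X_0$ if $X\smallsetminus X_0=\bigcup_{b\in B}L(b)$. Elements $x,y\in X\smallsetminus X_0$ are orderly dependent if $x\in L(y)$ or $y\in L(x)$, and orderly independent otherwise; $B$ is orderly independent if any two distinct members of $B$ are orderly independent. A basis of $X\smallsetminus X_0$ is an orderly independent generating subset of $X\smallsetminus X_0$. *)

From mathcomp Require Import all_boot all_algebra.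
Set Implicit Arguments. Unset Strict Implicit. Unset Printing Implicit Defensive.
Import GRing.Theory.
Local Open Scope ring_scope.

Record evs (K : fieldType) := EVS {
  ev_carrier :> Type;
  ev_le : ev_carrier -> ev_carrier -> Prop;
  ev_add : ev_carrier -> ev_carrier -> ev_carrier;
  ev_zero : ev_carrier;
  ev_smul : K -> ev_carrier -> ev_carrier;
  ev_le_refl : forall x, ev_le x x;
  ev_le_antisym : forall x y, ev_le x y -> ev_le y x -> x = y;
  ev_le_trans : forall x y z, ev_le x y -> ev_le y z -> ev_le x z;
  ev_addA : forall x y z, ev_add x (ev_add y z) = ev_add (ev_add x y) z;
  ev_addC : forall x y, ev_add x y = ev_add y x;
  ev_add0 : forall x, ev_add x ev_zero = x;
  ev_le_add : forall x y z, ev_le x y -> ev_le (ev_add x z) (ev_add y z);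
  ev_le_smul : forall (a : K) x y, ev_le x y -> ev_le (ev_smul a x) (ev_smul a y);
  ev_smulD : forall (a : K) x y,
      ev_smul a (ev_add x y) = ev_add (ev_smul a x) (ev_smul a y);
  ev_smulA : forall (a b : K) x, ev_smul a (ev_smul b x) = ev_smul (a * b) x;
  ev_smul_addK : forall (a b : K) x,
      ev_le (ev_smul (a + b) x) (ev_add (ev_smul a x) (ev_smul b x));
  ev_smul1 : forall x, ev_smul 1 x = x;
  ev_smul_eq0 : forall (a : K) x, ev_smul a x = ev_zero <-> (a = 0 \/ x = ev_zero);
  ev_prim_iff : forall x,
      ev_add x (ev_smul (-1) x) = ev_zero <-> (forall y, ev_le y x -> y = x);
  ev_prim_below : forall x, exists p,
      (forall y, ev_le y p -> y = p) /\ ev_le p x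
}.

Section EVSDefs.
Variable K : fieldType.

(* primitive space X_0 : minimal elements *)
Definition prim (X : evs K) (z : X) : Prop :=
  forall y : X, ev_le y z -> y = z.

Definition Lset (X : evs K) (x z : X) : Prop :=
  exists a : K, a <> 0 /\ exists p : X, prim p /\ ev_le (ev_add (ev_smul a x) p) z.

Definition generates (X : evs K) (B : X -> Prop) : Prop :=
  (forall b, B b -> ~ prim b) /\
  (forall z : X, ~ prim z <-> exists b, B b /\ Lset b z).

Definition orderly_dependent (X : evs K) (x y : X) : Prop :=
  Lset y x \/ Lset x y.

Definition orderly_independent (X : evs K) (B : X -> Prop) : Prop :=
  (forall b, B b -> ~ prim b) /\
  (forall x y, B x -> B y -> x <> y -> ~ orderly_dependent x y).

Definition is_basis (X : evs K) (B : X -> Prop) : Prop :=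
  orderly_independent B /\ generates B.

Definition order_morphism (X Y : evs K) (f : X -> Y) : Prop :=
  (forall x y, f (ev_add x y) = ev_add (f x) (f y)) /\
  (forall (a : K) x, f (ev_smul a x) = ev_smul a (f x)) /\
  (forall x y, ev_le x y -> ev_le (f x) (f y)) /\
  (forall p q : Y, (exists x, f x = p) -> (exists x, f x = q) -> ev_le p q ->
     (forall z, f z = p -> exists w, f w = q /\ ev_le z w) /\
     (forall z, f z = q -> exists w, f w = p /\ ev_le w z)).

Definition order_isomorphism (X Y : evs K) (f : X -> Y) : Prop :=
  order_morphism f /\ bijective f.

Definition img_set (X Y : Type) (f : X -> Y) (B : X -> Prop) : Y -> Prop :=
  fun y => exists b, B b /\ f b = y.

End EVSDefs.

From mathcomp Require Import all_boot all_algebra.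

(* An order-isomorphism preserves sums and scalar multiples, and it also
   reflects the order: the lifting clause of an order-morphism lifts
   [phi x <= phi y] to [x <= w] with [phi w = phi y], and injectivity forces
   [w = y].  Hence it preserves and reflects primitive elements and the sets
   [L(x)], and generation and orderly independence are expressed through
   these notions alone. *)

Set Implicit Arguments. Unset Strict Implicit.

Section OrderIsomorphism.
Variables (K : fieldType) (X Y : evs K) (phi : X -> Y).
Hypothesis hphi : order_isomorphism phi.

Lemma order_iso_inj : injective phi.
Proof. by case: hphi => _ /bij_inj. Qed.

Lemma order_iso_surj (y : Y) : exists x, phi x = y.
Proof. by case: hphi => _ [psi _ psiK]; exists (psi y). Qed.

Lemma order_iso_add x y : phi (ev_add x y) = ev_add (phi x) (phi y).
Proof. by case: hphi => [[phiD _] _]. Qed.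

Lemma order_iso_smul a x : phi (ev_smul a x) = ev_smul a (phi x).
Proof. by case: hphi => [[_ [phiZ _]] _]. Qed.

Lemma order_iso_le x y : ev_le (phi x) (phi y) <-> ev_le x y.
Proof.
case: hphi => [[_ [_ [phi_mono phi_lift]]] _]; split; last exact: phi_mono.
move=> le_phi.
have [lift_up _] := phi_lift _ _ (ex_intro _ x erefl) (ex_intro _ y erefl) le_phi.
have [w [phi_wy le_xw]] := lift_up x erefl.
by rewrite -(order_iso_inj phi_wy).
Qed.

Lemma order_iso_prim x : prim (phi x) <-> prim x.
Proof.
split=> [prim_phix y le_yx | prim_x y].
  by apply: order_iso_inj; apply: prim_phix; apply/order_iso_le.
have [y' <-] := order_iso_surj y.
by move/order_iso_le/prim_x ->.
Qed.

Lemma order_iso_Lset b z : Lset (phi b) (phi z) <-> Lset b z.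
Proof.
split=> [[a [a_neq0 [p [prim_p le_p]]]] | [a [a_neq0 [p [prim_p le_p]]]]];
  exists a; split=> //.
- have [p' phi_p'] := order_iso_surj p; subst p.
  exists p'; split; first exact/order_iso_prim.
  by apply/order_iso_le; rewrite order_iso_add order_iso_smul.
- exists (phi p); split; first exact/order_iso_prim.
  by rewrite -order_iso_smul -order_iso_add; apply/order_iso_le.
Qed.

Lemma order_iso_orderly_dependent x y :
  orderly_dependent (phi x) (phi y) <-> orderly_dependent x y.
Proof.
by split=> -[dep | dep]; [left | right | left | right]; apply/order_iso_Lset.
Qed.

Lemma img_set_not_prim (B : X -> Prop) :
  (forall b, B b -> ~ prim b) -> forall y, img_set phi B y -> ~ prim y.
Proof. by move=> B_np _ [b [Bb <-]] /order_iso_prim; apply: B_np. Qed.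

Lemma generates_img (B : X -> Prop) : generates B -> generates (img_set phi B).
Proof.
move=> [B_np B_gen]; split; first exact: img_set_not_prim.
move=> y; have [z <-] := order_iso_surj y; split.
- move=> /order_iso_prim /B_gen [b [Bb Lbz]].
  by exists (phi b); split; [exists b | apply/order_iso_Lset].
- move=> [_ [[b [Bb <-]] /order_iso_Lset Lbz]] /order_iso_prim.
  by apply/B_gen; exists b.
Qed.

Lemma orderly_independent_img (B : X -> Prop) :
  orderly_independent B -> orderly_independent (img_set phi B).
Proof.
move=> [B_np B_indep]; split; first exact: img_set_not_prim.
move=> _ _ [x [Bx <-]] [y [By <-]] neq_phi /order_iso_orderly_dependent.
by apply: B_indep => // eq_xy; apply: neq_phi; rewrite eq_xy.
Qed.

Lemma is_basis_img (B : X -> Prop) : is_basis B -> is_basis (img_set phi B).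
Proof.
by move=> [B_indep B_gen]; split; [apply: orderly_independent_img | apply: generates_img].
Qed.

End OrderIsomorphism.

Theorem mainTheorem20 (K : fieldType) (X Y : evs K) (phi : X -> Y)
  (hphi : order_isomorphism phi) :
  (forall B : X -> Prop, generates B -> generates (img_set phi B)) /\
  (forall B : X -> Prop, orderly_independent B -> orderly_independent (img_set phi B)) /\
  (forall B : X -> Prop, is_basis B -> is_basis (img_set phi B)).
Proof.
split; first exact: generates_img.
split; first exact: orderly_independent_img.
exact: is_basis_img.
Qed.
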